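(* Let $\beta>1$ and let $\mathcal{T}$ be a spanning tree of the ladder in the support of $\mathbb{P}$. Let $e=\{(i,h-1),(i,h)\}$ be a horizontal edge of the ray such that the other horizontal edge $\{(1-i,h-1),(1-i,h)\}$ is not in $\mathcal{T}$. Let $Y$ be the walk on the ray (the walk $X$ observed at its times on the ray) started at $(i,h)$. Then $$P^{\mathcal{T}}_{(i,h)}\big[Y_k\ne(i,h-1)\text{ for all }k\ge1\big]\ \ge\ \frac{\beta-1}{2\beta}.$$
   Context: Ladder graph: vertex set $\{0,1\}\times\mathbb{Z}$, vertical edges $z_k=\{(0,k),(1,k)\}$, horizontal edges joining $(i,k-1)$ and $(i,k)$. $\mathbb{P}$ is the law of the random spanning tree of the ladder obtained as the limit of weighted spanning tree measures on finite ladders (weight $c>0$ per vertical edge, $1$ per horizontal edge); a.s. it contains a unique bi-infinite self-avoiding path (the ray). Conductances: $z_k$ and the horizontal edges joining $(i,k-1),(i,k)$ have conductance $\beta^k$. $X$ is the random walk on $\mathcal{T}$ jumping to neighbors with probability proportional to conductances; the walk on the ray $Y$ jumps between ray neighbors with probabilities proportional to the conductances of the ray edges. *)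

From HB Require Import structures.
From mathcomp Require Import all_boot all_order all_algebra.
From mathcomp Require Import all_classical all_reals all_analysis.
Set Implicit Arguments. Unset Strict Implicit. Unset Printing Implicit Defensive.
Import Order.TTheory GRing.Theory Num.Theory.
Import numFieldNormedType.Exports.
Local Open Scope classical_set_scope.
Local Open Scope ring_scope.

(* Vertices of the ladder {0,1} x Z ; the boolean encodes the row (false = 0). *)
Definition V := (bool * int)%type.

(* Edges of the ladder:
   (None, k)   = the vertical edge z_k = {(0,k),(1,k)};
   (Some i, k) = the horizontal edge {(i,k-1),(i,k)}. *)
Definition ledge := (option bool * int)%type.

Definition ladder_adj (u v : V) : bool :=
  ((u.2 == v.2) && (u.1 != v.1)) ||
  ((u.1 == v.1) && ((u.2 == v.2 + 1) || (v.2 == u.2 + 1))).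

Definition edge_of (u v : V) : ledge :=
  if u.2 == v.2 then (None, u.2) else (Some u.1, Num.max u.2 v.2).

Definition tadj (E : pred ledge) : rel V :=
  fun u v => ladder_adj u v && E (edge_of u v).

Definition tconn (E : pred ledge) (u v : V) : Prop :=
  exists p : seq V, path (tadj E) u p && (last u p == v).

Definition rm_edge (E : pred ledge) (e : ledge) : pred ledge :=
  fun e' => E e' && (e' != e).

Definition acyclic (E : pred ledge) : Prop :=
  forall u v, tadj E u v -> ~ tconn (rm_edge E (edge_of u v)) u v.

Definition spanning_tree (E : pred ledge) : Prop :=
  (forall u v, tconn E u v) /\ acyclic E.

Definition in_winV (n : nat) (u : V) : bool := (- (n%:Z) <= u.2 <= n%:Z).

(* edges of the finite ladder: inl k = vertical edge at height k-n (k <= 2n),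
   inr (i,k) = horizontal edge {(i,k-n),(i,k+1-n)} (k < 2n) *)
Definition fedge (n : nat) := ('I_(2 * n + 1) + (bool * 'I_(2 * n)))%type.

Definition emb (n : nat) (f : fedge n) : ledge :=
  match f with
  | inl k => (None, k%:Z - n%:Z)
  | inr (i, k) => (Some i, k%:Z + 1 - n%:Z)
  end.

Definition fcfg (n : nat) (S : {set fedge n}) : pred ledge :=
  fun e => [exists f in S, emb f == e].

Definition is_vert (n : nat) (f : fedge n) : bool :=
  if f is inl _ then true else false.

Definition fspan (n : nat) (S : {set fedge n}) : Prop :=
  (forall u v, in_winV n u -> in_winV n v -> tconn (fcfg S) u v) /\
  acyclic (fcfg S).

Definition fweight (R : realType) (c : R) (n : nat) (S : {set fedge n}) : R :=
  c ^+ #|[set f in S | is_vert f]|.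

Definition Pfin (R : realType) (c : R) (n : nat) (A : pred ledge -> Prop) : R :=
  (\sum_(S : {set fedge n} | `[< fspan S /\ A (fcfg S) >]) fweight c S) /
  (\sum_(S : {set fedge n} | `[< fspan S >]) fweight c S).

Definition in_winE (N : nat) (e : ledge) : bool :=
  match e with
  | (None, k) => (- (N%:Z) <= k <= N%:Z)
  | (Some _, k) => (- (N%:Z) < k <= N%:Z)
  end.

Definition cyl (N : nat) (T : pred ledge) : pred ledge -> Prop :=
  fun E => forall e, in_winE N e -> E e = T e.

(* T lies in the support of the limit measure P (weak limit of the Pfin):
   every basic cylinder neighbourhood of T has positive limiting probability *)
Definition in_support (R : realType) (c : R) (T : pred ledge) : Prop :=
  forall N : nat, exists l : R, 0 < l /\ ((fun n => Pfin c n (cyl N T)) @ \oo --> l).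

Definition biinf_path (T : pred ledge) (r : int -> V) : Prop :=
  injective r /\ forall j, tadj T (r j) (r (j + 1)).

Definition is_ray (T : pred ledge) (r : int -> V) : Prop :=
  biinf_path T r /\
  (forall r', biinf_path T r' -> forall j, exists j', r' j = r j').

(* conductance of the edge joining u and v: beta^k for z_k and for
   the horizontal edges {(i,k-1),(i,k)} *)
Definition cond (R : realType) (beta : R) (u v : V) : R :=
  beta ^ (Num.max u.2 v.2).

(* walk Y on the ray r (indexed by Z): probability of stepping forward *)
Definition pfwd (R : realType) (beta : R) (r : int -> V) (j : int) : R :=
  cond beta (r j) (r (j + 1)) /
  (cond beta (r (j - 1)) (r j) + cond beta (r j) (r (j + 1))).

(* avoid_fin n j = P_{r j}[ Y_k <> a for all 1 <= k <= n ] *)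
Fixpoint avoid_fin (R : realType) (beta : R) (r : int -> V) (a : V)
    (n : nat) (j : int) : R :=
  match n with
  | 0 => 1
  | n'.+1 =>
      pfwd beta r j *
        (if r (j + 1) == a then 0 else avoid_fin beta r a n' (j + 1)) +
      (1 - pfwd beta r j) *
        (if r (j - 1) == a then 0 else avoid_fin beta r a n' (j - 1))
  end.

(* P_{r j}[ Y_k <> a for all k >= 1 ] (limit of a nonincreasing sequence) *)
Definition avoid_prob (R : realType) (beta : R) (r : int -> V) (a : V) (j : int) : R :=
  lim ((fun n => avoid_fin beta r a n j) @ \oo).

From HB Require Import structures.
From mathcomp Require Import all_boot all_order all_algebra.
From mathcomp Require Import all_classical all_reals all_analysis.
From mathcomp Require Import zify ring lra.
Import Order.TTheory GRing.Theory Num.Theory.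
Import numFieldNormedType.Exports.
Local Open Scope classical_set_scope.
Local Open Scope ring_scope.
Set Implicit Arguments. Unset Strict Implicit.

(* Once the ray has climbed the horizontal (rail) edge from (i, h - 1) to
   (i, h), its forward half never goes below height h again: the other rail
   edge at height h is missing, and above h a first descent would be forced
   straight down through levels whose vertices are all used already.  Along
   such an upward self-avoiding path every level contributes at most one
   vertical edge (rung) and one rail step, and never two rungs in a row, so
   the resistance from (i, h - 1) to infinity is at most
   2 beta / ((beta - 1) beta ^ h).  The resistance from (i, h - 1), rescaled
   by that bound, is a harmonic function of the walk on the ray that vanishes
   at (i, h - 1) and is at most 1; it therefore stays below the probability of
   never hitting (i, h - 1), and at (i, h) it equals (beta - 1) / (2 beta). *)

Lemma ladder_adj_cases (u v : V) : ladder_adj u v ->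
  [\/ v = (~~ u.1, u.2), v = (u.1, u.2 + 1) | v = (u.1, u.2 - 1)].
Proof.
case: u v => [b k] [b' k']; rewrite /ladder_adj /=.
case/orP => [/andP [/eqP <- ne] | /andP [/eqP <- /orP [/eqP -> | /eqP ->]]].
- by apply: Or31; case: b b' ne => [] [].
- by apply: Or33; rewrite addrK.
- by apply: Or32.
Qed.

Lemma ladder_adjC : symmetric ladder_adj.
Proof.
case=> [b k] [b' k']; rewrite /ladder_adj /=.
by rewrite (eq_sym k) (eq_sym b) (eq_sym b') [(k' == _) || _]orbC.
Qed.

Lemma bool_eq_or_negb (b c : bool) : b = c \/ b = ~~ c.
Proof. by case: b; case: c; auto. Qed.

Definition down_step (x : nat -> V) (m : nat) : Prop :=
  x m.+1 = ((x m).1, (x m).2 - 1).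

Section NoDescent.
Variables (x : nat -> V) (i : bool) (h : int).
Hypotheses (x_inj : injective x) (x_adj : forall m, ladder_adj (x m) (x m.+1)).
Hypotheses (x0 : x 0%N = (i, h)) (x1 : x 1%N <> (i, h - 1)).
Hypothesis x_avoid : forall m, ~ (x m = (~~ i, h) /\ x m.+1 = (~~ i, h - 1)).

Lemma levels_visited m : (forall l, (l < m)%N -> ~ down_step x l) ->
  h <= (x m).2 /\
  forall k, h <= k < (x m).2 -> exists2 l, (l < m)%N & (x l).2 = k.
Proof.
elim: m => [|m IH] no_down; first by rewrite x0 /=; split=> // k; lia.
have [h_le visited] := IH (fun l lm => no_down l (ltnW lm)).
case: (ladder_adj_cases (x_adj m)) => [->|->|down] /=.
- by split=> // k /visited [l lm e]; exists l => //; apply: ltnW.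
- split=> [|k hk]; first lia.
  have [->|ne] := eqVneq k (x m).2; first by exists m.
  have /visited [l lm e] : h <= k < (x m).2 by lia.
  by exists l => //; apply: ltnW.
- by case: (no_down m).
Qed.

(* Below a first descent every level down to [h] is already used, so the
   path is forced straight down its column. *)
Lemma descent_continues m rho y : (forall l, (l < m)%N -> ~ down_step x l) ->
  x m = (rho, y) -> x m.+1 = (rho, y - 1) ->
  forall n : nat, h + n%:Z <= y ->
  x (m + n)%N = (rho, y - n%:Z) /\ x (m + n).+1 = (rho, y - n%:Z - 1).
Proof.
move=> no_down xm xm1.
have [_] := levels_visited no_down; rewrite xm /= => visited.
elim=> [|n IH] hn; first by rewrite addn0 xm xm1 !subr0.
have [e1 e2] := IH ltac:(lia).
split; first by rewrite addnS e2; congr pair; lia.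
rewrite addnS; case: (ladder_adj_cases (x_adj (m + n).+1)); rewrite e2 /=.
- move=> side; exfalso.
  have /visited [q qm] : h <= y - n%:Z - 1 < y by lia.
  case xq : (x q) => [b k] /= k_eq; subst k.
  have : x q = x (m + n).+1 \/ x q = x (m + n).+2.
    by rewrite xq e2 side; case: (bool_eq_or_negb b rho) => ->; auto.
  by case=> /x_inj; lia.
- move=> up; have /x_inj : x (m + n).+2 = x (m + n)%N.
    by rewrite up e1; congr pair; lia.
  lia.
- by move=> ->; congr pair; lia.
Qed.

Lemma no_down_step m : ~ down_step x m.
Proof.
suff no_down n : forall l, (l < n)%N -> ~ down_step x l.
  exact: (no_down m.+1).
elim: n => [//|m' IH] l; rewrite ltnS leq_eqVlt => /orP [/eqP -> | /IH //] down.
case xm : (x m') => [rho y]; rewrite /down_step xm /= in down.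
have [h_le _] := levels_visited IH; rewrite xm /= in h_le.
have [] := descent_continues IH xm down (n := `|y - h|%N) ltac:(lia).
have -> : y - `|y - h|%N%:Z = h by lia.
have [-> | ->] := bool_eq_or_negb rho i.
- by rewrite -x0 => /x_inj m'd0; rewrite m'd0.
- by move=> e1 e2; apply: x_avoid (conj e1 e2).
Qed.

End NoDescent.

Section WalkOnRay.
Variables (R : realType) (beta : R).
Hypothesis beta_gt0 : 0 < beta.

Lemma cond_gt0 u v : 0 < cond beta u v.
Proof. by rewrite /cond exprz_gt0. Qed.

Lemma condC u v : cond beta u v = cond beta v u.
Proof. by rewrite /cond maxC. Qed.

Lemma pfwd_ge0 r j : 0 <= pfwd beta r j.
Proof. by rewrite /pfwd divr_ge0 // ?addr_ge0 // ltW // cond_gt0. Qed.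

Lemma pfwd_le1 r j : pfwd beta r j <= 1.
Proof.
rewrite /pfwd ler_pdivrMr ?mul1r ?addr_gt0 ?cond_gt0 //.
by rewrite lerDr ltW // cond_gt0.
Qed.

Lemma avoid_finS_le r a n j :
  avoid_fin beta r a n.+1 j <= avoid_fin beta r a n j.
Proof.
elim: n j => [|n IH] j /=; have [q0 q1] := (pfwd_ge0 r j, pfwd_le1 r j).
  by case: ifP => _; case: ifP => _; nra.
apply: lerD; apply: ler_wpM2l; rewrite ?subr_ge0 //.
all: by case: ifP => // _; apply: IH.
Qed.

Lemma avoid_prob_ge r a j (x : R) :
  (forall n, x <= avoid_fin beta r a n j) -> x <= avoid_prob beta r a j.
Proof.
move=> x_le; set u := fun n => avoid_fin beta r a n j.
have u_noninc : {homo u : n m / (n <= m)%N >-> m <= n}.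
  move=> n m /subnK <-; elim: (m - n)%N => // k IH.
  by rewrite addSn; apply: le_trans IH; apply: avoid_finS_le.
have u_cvg : cvgn u.
  by apply: nonincreasing_is_cvgn => //; exists x => _ [n _ <-]; apply: x_le.
by apply: limr_ge => //; apply: nearW.
Qed.

Lemma pfwd_reflect r j : pfwd beta (fun k => r (- k)) j = 1 - pfwd beta r (- j).
Proof.
rewrite /pfwd opprD opprB [1 - j]addrC.
rewrite [cond _ (r (- j + 1)) _]condC [cond _ (r (- j - 1)) _]condC.
have c0 := cond_gt0 (r (- j)) (r (- j - 1)).
have c1 := cond_gt0 (r (- j)) (r (- j + 1)).
by field; lra.
Qed.

Lemma avoid_fin_reflect r a n j :
  avoid_fin beta (fun k => r (- k)) a n j = avoid_fin beta r a n (- j).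
Proof.
elim: n j => [|n IH] j //=.
rewrite !IH pfwd_reflect.
have [-> ->] : - (j + 1) = - j - 1 /\ - (j - 1) = - j + 1 by split; ring.
by set X := (if _ then _ else _); set Y := (if _ then _ else _); ring.
Qed.

Lemma avoid_prob_reflect r a j :
  avoid_prob beta (fun k => r (- k)) a j = avoid_prob beta r a (- j).
Proof. by rewrite /avoid_prob; under eq_fun do rewrite avoid_fin_reflect. Qed.

Lemma harmonic_le_avoid_fin r a ja (phi : nat -> R) :
  r ja = a -> (forall m : nat, r (ja + m.+1%:Z) != a) ->
  phi 0%N = 0 -> (forall m, phi m <= 1) ->
  (forall m, phi m.+1 = pfwd beta r (ja + m.+1%:Z) * phi m.+2
                      + (1 - pfwd beta r (ja + m.+1%:Z)) * phi m) ->
  forall n m, phi m.+1 <= avoid_fin beta r a n (ja + m.+1%:Z).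
Proof.
move=> r_ja r_neq phi0 phi_le1 phi_harm n.
elim: n => [|n IH] m /=; first exact: phi_le1.
have [p0 p1] := (pfwd_ge0 r (ja + m.+1%:Z), pfwd_le1 r (ja + m.+1%:Z)).
have -> : ja + m.+1%:Z + 1 = ja + m.+2%:Z by lia.
rewrite phi_harm (negbTE (r_neq m.+1)).
apply: lerD; apply: ler_wpM2l; rewrite ?subr_ge0 ?IH //.
case: m {p0 p1} => [|m]; first by rewrite addrK r_ja eqxx phi0.
have -> : ja + m.+2%:Z - 1 = ja + m.+1%:Z by lia.
by rewrite (negbTE (r_neq m)); apply: IH.
Qed.

End WalkOnRay.

Definition ray_from (r : int -> V) (j : int) (m : nat) : V := r (j + m%:Z).

Definition vertical_into (x : nat -> V) (m : nat) : bool :=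
  if m is m'.+1 then (x m').2 == (x m).2 else false.

Section Resistance.
Variables (R : realType) (beta : R).
Hypothesis beta_gt1 : 1 < beta.

Let beta_gt0 : 0 < beta. Proof. exact: lt_trans ltr01 beta_gt1. Qed.
Let beta1_gt0 : 0 < beta - 1. Proof. by rewrite subr_gt0. Qed.

Fixpoint path_resistance (x : nat -> V) (m : nat) : R :=
  if m is m'.+1 then path_resistance x m' + (cond beta (x m') (x m))^-1 else 0.

Lemma path_resistance_shift x m : path_resistance x m.+1 =
  (cond beta (x 0%N) (x 1%N))^-1 + path_resistance (fun k => x k.+1) m.
Proof. by elim: m => [|m /= ->]; rewrite /= ?add0r ?addr0 // addrA. Qed.

Lemma ray_resistance_harmonic r ja m :
  path_resistance (ray_from r ja) m.+1 =
    pfwd beta r (ja + m.+1%:Z) * path_resistance (ray_from r ja) m.+2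
    + (1 - pfwd beta r (ja + m.+1%:Z)) * path_resistance (ray_from r ja) m.
Proof.
rewrite /pfwd /= /ray_from.
have [-> ->] : ja + m.+1%:Z + 1 = ja + m.+2%:Z /\ ja + m.+1%:Z - 1 = ja + m%:Z.
  by split; lia.
have c0 := cond_gt0 beta_gt0 (r (ja + m%:Z)) (r (ja + m.+1%:Z)).
have c1 := cond_gt0 beta_gt0 (r (ja + m.+1%:Z)) (r (ja + m.+2%:Z)).
by field; lra.
Qed.

(* Resistance used so far plus an upper bound on what an upward path can still
   add: a rung and a rail step per level, but no rung right after a rung. *)
Definition ladder_potential (x : nat -> V) (m : nat) : R :=
  path_resistance x m +
  (if vertical_into x m then 2 else beta + 1) / ((beta - 1) * beta ^ (x m).2).

Section UpwardPath.
Variable x : nat -> V.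
Hypotheses (x_inj : injective x) (x_adj : forall m, ladder_adj (x m) (x m.+1)).
Hypothesis x_up : forall m, ~ down_step x m.

Lemma ladder_potentialS_le m : ladder_potential x m.+1 <= ladder_potential x m.
Proof.
have [b0 b1] := (beta_gt0, beta1_gt0).
have pow_gt0 : 0 < beta ^ (x m).2 by apply: exprz_gt0.
rewrite /ladder_potential /=.
case: (ladder_adj_cases (x_adj m)) => [rung|up|down]; last by case: (x_up down).
- have -> : vertical_into x m = false.
    case: m rung {pow_gt0} => //= m rung; apply/eqP => same_level.
    case: (ladder_adj_cases (x_adj m)) => prev;
      rewrite prev /= in same_level; try lia.
    have : x m.+2 = x m by rewrite rung prev negbK -surjective_pairing.
    by move/x_inj; lia.
  rewrite rung /= eqxx /cond /= maxxx -addrA lerD2l.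
  set y := (x m).2.
  have -> : (beta ^ y)^-1 + 2 / ((beta - 1) * beta ^ y) =
            (beta + 1) / ((beta - 1) * beta ^ y) by field; lra.
  exact: lexx.
- have w_ge2 : 2 <= (if vertical_into x m then 2 else beta + 1).
    by case: ifP; lra.
  have -> : ((x m).2 == (x m.+1).2) = false by rewrite up /=; apply/eqP; lia.
  rewrite up /cond /= (_ : Num.max _ _ = (x m).2 + 1); last first.
    by apply/max_idPr; lia.
  rewrite expfzDr ?gt_eqF // expr1z -addrA lerD2l.
  set y := (x m).2.
  have -> : (beta ^ y * beta)^-1
            + (beta + 1) / ((beta - 1) * (beta ^ y * beta))
            = 2 / ((beta - 1) * beta ^ y) by field; lra.
  by rewrite ler_pM2r // invr_gt0 mulr_gt0.
Qed.

Lemma path_resistance_le m :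
  path_resistance x m <= (beta + 1) / ((beta - 1) * beta ^ (x 0%N).2).
Proof.
have potential_le : ladder_potential x m <= ladder_potential x 0.
  elim: m => // m IH; exact: le_trans (ladder_potentialS_le m) IH.
suff : path_resistance x m <= ladder_potential x 0.
  by rewrite /ladder_potential /= add0r.
apply: le_trans potential_le; rewrite /ladder_potential lerDl.
have b0 := beta_gt0.
by rewrite divr_ge0 ?mulr_ge0 ?ltW ?exprz_gt0 //; case: ifP; lra.
Qed.

End UpwardPath.
End Resistance.

Lemma not_tadj_missing_rail (T : pred ledge) (i : bool) (h : int) :
  ~~ T (Some i, h) ->
  ~~ tadj T (i, h) (i, h - 1) /\ ~~ tadj T (i, h - 1) (i, h).
Proof.
move=> gap; rewrite /tadj /edge_of /=.
have [-> ->] : (h == h - 1) = false /\ (h - 1 == h) = false.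
  by split; apply/eqP; lia.
have [-> ->] : Num.max h (h - 1) = h /\ Num.max (h - 1) h = h.
  by split; [apply/max_idPl | apply/max_idPr]; lia.
by rewrite (negbTE gap) !andbF.
Qed.

Section RayAboveGap.
Variables (R : realType) (beta : R) (r : int -> V) (i : bool) (h ja : int).
Hypotheses (beta_gt1 : 1 < beta) (r_inj : injective r).
Hypothesis r_adj : forall j, ladder_adj (r j) (r (j + 1)).
Hypothesis r_avoid : forall j, ~ (r j = (~~ i, h) /\ r (j + 1) = (~~ i, h - 1)).
Hypotheses (r_ja : r ja = (i, h - 1)) (r_ja1 : r (ja + 1) = (i, h)).

Lemma ray_cond_first : cond beta (ray_from r ja 0) (ray_from r ja 1) = beta ^ h.
Proof.
rewrite /ray_from addr0 r_ja r_ja1 /cond /=.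
by rewrite (_ : Num.max (h - 1) h = h) //; apply/max_idPr; rewrite gerBl ler01.
Qed.

Lemma ray_resistance_le m :
  path_resistance beta (ray_from r ja) m <= 2 * beta / ((beta - 1) * beta ^ h).
Proof.
have b1 := beta_gt1; have b0 : 0 < beta by lra.
have pow_gt0 : 0 < beta ^ h by apply: exprz_gt0.
set y := ray_from r (ja + 1).
have y_succ : (fun k => ray_from r ja k.+1) = y.
  by apply: funext => k; rewrite /y /ray_from; congr r; lia.
have succ_index k : ja + 1 + k.+1%:Z = ja + 1 + k%:Z + 1 by lia.
have y_inj : injective y by move=> k l /r_inj; lia.
have y_adj k : ladder_adj (y k) (y k.+1) by rewrite /y /ray_from succ_index.
have y0 : y 0%N = (i, h) by rewrite /y /ray_from addr0.
have y1 : y 1%N <> (i, h - 1) by rewrite -r_ja => /r_inj; lia.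
have y_avoid k : ~ (y k = (~~ i, h) /\ y k.+1 = (~~ i, h - 1)).
  by rewrite /y /ray_from succ_index.
have y_up := no_down_step y_inj y_adj y0 y1 y_avoid.
case: m => [|m]; first by rewrite /= divr_ge0 ?mulr_ge0 ?ltW //; lra.
rewrite path_resistance_shift y_succ ray_cond_first.
have -> : 2 * beta / ((beta - 1) * beta ^ h) =
          (beta ^ h)^-1 + (beta + 1) / ((beta - 1) * beta ^ h) by field; lra.
have := path_resistance_le beta_gt1 y_inj y_adj y_up m.
by rewrite y0 lerD2l.
Qed.

Lemma avoid_fin_escape_ge n :
  (beta - 1) / (2 * beta) <= avoid_fin beta r (i, h - 1) n (ja + 1).
Proof.
have b1 := beta_gt1; have b0 : 0 < beta by lra.
have pow_gt0 : 0 < beta ^ h by apply: exprz_gt0.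
set t := (beta - 1) / (2 * beta).
have t_ge0 : 0 <= t by apply: divr_ge0; lra.
(* [t * beta ^ h] inverts the bound of [ray_resistance_le], so [phi <= 1]. *)
pose phi m := t * beta ^ h * path_resistance beta (ray_from r ja) m.
have phi1 : phi 1%N = t by rewrite /phi /= add0r ray_cond_first mulfK ?gt_eqF.
rewrite -phi1; apply: (harmonic_le_avoid_fin b0 r_ja) => [m||m|m].
- by apply/eqP; rewrite -r_ja => /r_inj; lia.
- by rewrite /phi /= mulr0.
- have -> : 1 = t * beta ^ h * (2 * beta / ((beta - 1) * beta ^ h)).
    by rewrite /t; field; lra.
  apply: ler_wpM2l; last exact: ray_resistance_le.
  exact: mulr_ge0 t_ge0 (ltW pow_gt0).
- rewrite /phi; cbv beta.
  by rewrite (ray_resistance_harmonic beta_gt1 r ja m); ring.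
Qed.

End RayAboveGap.

Unset Implicit Arguments.

Theorem mainTheorem10 (R : realType) (c beta : R) (T : pred ledge)
    (r : int -> V) (i : bool) (h : int) (j0 : int) :
  0 < c -> 1 < beta ->
  spanning_tree T -> in_support c T ->
  is_ray T r ->
  (exists j, (r j = (i, h - 1) /\ r (j + 1) = (i, h)) \/
             (r j = (i, h) /\ r (j + 1) = (i, h - 1))) ->
  ~~ T (Some (~~ i), h) ->
  r j0 = (i, h) ->
  (beta - 1) / (2 * beta) <= avoid_prob beta r (i, h - 1) j0.
Proof.
move=> _ beta_gt1 _ _ [[r_inj r_tadj] _] [j edge] gap r_j0.
have beta_gt0 : 0 < beta by lra.
have r_adj k : ladder_adj (r k) (r (k + 1)) by case/andP: (r_tadj k).
have [no_down no_up] := not_tadj_missing_rail gap.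
have swap (k : int) : - k = - (k + 1) + 1 by ring.
case: edge => [[r_j r_j1] | [r_j r_j1]].
- have -> : j0 = j + 1 by apply: r_inj; rewrite r_j0 r_j1.
  apply: (avoid_prob_ge beta_gt0) => n; apply: avoid_fin_escape_ge => //.
  by move=> k [e1 e2]; move: no_down; rewrite -e1 -e2 r_tadj.
- have <- : j = j0 by apply: r_inj; rewrite r_j0 r_j.
  rewrite -[j]opprK -avoid_prob_reflect //.
  apply: (avoid_prob_ge beta_gt0) => n; rewrite (swap j).
  apply: avoid_fin_escape_ge => //.
  + by move=> k l /r_inj /oppr_inj.
  + by move=> k; rewrite ladder_adjC (swap k) r_adj.
  + by move=> k [e1 e2]; move: no_up; rewrite -e1 -e2 (swap k) r_tadj.
  + by rewrite opprK.
  + by rewrite -swap opprK.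
Qed.
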